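(* Suppose Assumption 1 holds and let $\gamma\in(0,1]$. (i) Let $x\in\operatorname{dom}\psi$, let $H$ be symmetric with $Q^x_H$ $\sigma$-strongly convex for some $\sigma>0$, and let $d$ satisfy the $\eta$-inexactness condition for $Q^x_H$ for some $\eta\in[0,1)$. If $$(1-\gamma)\frac{1-\sqrt\eta}{1+\sqrt\eta}\,\sigma + \lambda_{\min}(H)\ge L,$$ then the sufficient decrease condition $F(x)-F(x+d)\ge -\gamma Q^x_H(d)\ge 0$ holds. (ii) Consequently, in Algorithm 2 (with every computed $d^k$ satisfying the $\eta$-inexactness condition for a fixed $\eta\in[0,1)$), if the initial matrix satisfies $m_0 I\preceq H^0_k\preceq M_0 I$ for some $M_0>0$ and $m_0\le M_0$, then for Variant 2 the final (accepted) $H_k$ satisfies $\|H_k\|\le \tilde M_2(\eta)$; and for Variant 1, if in addition $m_0>0$, the final $H_k$ satisfies $\|H_k\|\le\tilde M_1(\eta)$.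
   Context: Problem setting: $F(x)=f(x)+\psi(x)$ on $\mathbb{R}^n$. Assumption 1: $f:\mathbb{R}^n\to\mathbb{R}$ is differentiable with $L$-Lipschitz continuous gradient for some $L>0$; $\psi:\mathbb{R}^n\to\mathbb{R}\cup\{+\infty\}$ is convex, proper and closed; $F$ is bounded below; and the solution set $\Omega=\{x: F(x)=F^*\}$, $F^*=\inf F$, is nonempty. For $x\in\mathbb{R}^n$ and a symmetric matrix $H$, $Q^x_H(d) \coloneqq \nabla f(x)^T d + \frac12 d^T H d + \psi(x+d) - \psi(x)$ (so $Q^x_H(0)=0$) and $Q^*\coloneqq\inf_d Q^x_H(d)$. A vector $d$ satisfies the $\eta$-inexactness condition (for $Q=Q^x_H$) if $Q(d)-Q^*\le \eta(Q(0)-Q^* )$, equivalently $Q(d)\le(1-\eta)Q^*$. $\lambda_{\min}(H)$ is the smallest eigenvalue, $\|H\|$ the spectral norm. Algorithm 2: given $\beta\in(0,1)$, $\gamma\in(0,1]$, $x^0$, and fixed $\eta\in[0,1)$; for $k=0,1,2,\dots$: choose a symmetric initial matrix $H^0_k$ (in Variant 1, $H^0_k\succ0$); set $\alpha_k\leftarrow1$, $H_k\leftarrow H^0_k$, and compute $d^k$ satisfying the $\eta$-inexactness condition for $Q^{x^k}_{H_k}$; while the sufficient decrease condition $F(x^k)-F(x^k+d^k)\ge -\gamma Q^{x^k}_{H_k}(d^k)\ge 0$ fails: in Variant 1 set $\alpha_k\leftarrow\beta\alpha_k$ and $H_k\leftarrow H^0_k/\alpha_k$; in Variant 2 set $H_k\leftarrow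 H^0_k+\alpha_k^{-1}I$ and then $\alpha_k\leftarrow\beta\alpha_k$; then recompute $d^k$ satisfying the $\eta$-inexactness condition for $Q^{x^k}_{H_k}$. Finally set $x^{k+1}=x^k+d^k$. The ''final'' $H_k$ is the matrix for which the sufficient decrease condition is accepted. Constants: $\tilde M_2(\eta)\coloneqq M_0+\max\left\{1,\ \frac1\beta\left(\frac{L(1+\sqrt\eta)}{2-\gamma(1-\sqrt\eta)}-m_0\right)\right\}$ and $\tilde M_1(\eta)\coloneqq M_0\max\left\{1,\ \frac{L(1+\sqrt\eta)}{\beta(2-\gamma(1-\sqrt\eta))m_0}\right\}$. *)

From Stdlib Require Import Reals.
From Stdlib Require Vectors.Fin.
Open Scope R_scope.

Definition Vec (n : nat) := Fin.t n -> R.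
Definition Mat (n : nat) := Fin.t n -> Fin.t n -> R.

Fixpoint vsum (n : nat) : (Fin.t n -> R) -> R :=
  match n return (Fin.t n -> R) -> R with
  | O => fun _ => 0
  | S m => fun g => g Fin.F1 + vsum m (fun i => g (Fin.FS i))
  end.

Definition dot {n} (u v : Vec n) : R := vsum n (fun i => u i * v i).
Definition vnorm {n} (v : Vec n) : R := sqrt (dot v v).
Definition vadd {n} (u v : Vec n) : Vec n := fun i => u i + v i.
Definition vsub {n} (u v : Vec n) : Vec n := fun i => u i - v i.
Definition vscal {n} (c : R) (v : Vec n) : Vec n := fun i => c * v i.
Definition vzero {n} : Vec n := fun _ => 0.

Definition mv {n} (H : Mat n) (v : Vec n) : Vec n := fun i => dot (H i) v.
Definition quad {n} (H : Mat n) (v : Vec n) : R := dot v (mv H v).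
Definition Id {n} : Mat n := fun i j => if Fin.eq_dec i j then 1 else 0.
Definition mscal {n} (c : R) (H : Mat n) : Mat n := fun i j => c * H i j.
Definition madd {n} (A B : Mat n) : Mat n := fun i j => A i j + B i j.

Definition symmetric {n} (H : Mat n) : Prop := forall i j, H i j = H j i.

Definition loewner_le {n} (A B : Mat n) : Prop :=
  forall v : Vec n, quad A v <= quad B v.
Definition posdef {n} (H : Mat n) : Prop :=
  forall v : Vec n, (exists i, v i <> 0) -> 0 < quad H v.

Definition eigenvalue {n} (H : Mat n) (l : R) : Prop :=
  exists v : Vec n, (exists i, v i <> 0) /\ forall i, mv H v i = l * v i.
Definition is_lambda_min {n} (H : Mat n) (l : R) : Prop :=
  eigenvalue H l /\ forall mu, eigenvalue H mu -> l <= mu.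

Definition is_spec_norm {n} (H : Mat n) (s : R) : Prop :=
  is_lub (fun r => exists v : Vec n, vnorm v <= 1 /\ r = vnorm (mv H v)) s.

Inductive ER := ERfin (r : R) | ERinf.

Definition ER_le (a b : ER) : Prop :=
  match a, b with
  | _, ERinf => True
  | ERinf, ERfin _ => False
  | ERfin x, ERfin y => x <= y
  end.
Definition ER_add (a b : ER) : ER :=
  match a, b with
  | ERfin x, ERfin y => ERfin (x + y)
  | _, _ => ERinf
  end.
(* scaling by a positive real *)
Definition ER_scal (t : R) (a : ER) : ER :=
  match a with ERfin x => ERfin (t * x) | ERinf => ERinf end.

Definition dom {n} (psi : Vec n -> ER) (x : Vec n) : Prop := psi x <> ERinf.

Definition convex_ext {n} (psi : Vec n -> ER) : Prop :=
  forall (a b : Vec n) (t : R), 0 < t < 1 ->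
    ER_le (psi (vadd (vscal t a) (vscal (1 - t) b)))
          (ER_add (ER_scal t (psi a)) (ER_scal (1 - t) (psi b))).

Definition proper_ext {n} (psi : Vec n -> ER) : Prop := exists x, dom psi x.

Definition vconv {n} (xs : nat -> Vec n) (x : Vec n) : Prop :=
  forall eps, 0 < eps -> exists N, forall k, (N <= k)%nat -> vnorm (vsub (xs k) x) < eps.

(* closed = lower semicontinuous = all sublevel sets are closed *)
Definition closed_ext {n} (psi : Vec n -> ER) : Prop :=
  forall (c : R) (xs : nat -> Vec n) (x : Vec n),
    (forall k, ER_le (psi (xs k)) (ERfin c)) -> vconv xs x -> ER_le (psi x) (ERfin c).

Definition strongly_convex {n} (sigma : R) (Q : Vec n -> ER) : Prop :=
  forall (a b : Vec n) (t : R), 0 < t < 1 ->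
    ER_le (Q (vadd (vscal t a) (vscal (1 - t) b)))
          (ER_add (ER_add (ER_scal t (Q a)) (ER_scal (1 - t) (Q b)))
                  (ERfin (- (sigma / 2) * t * (1 - t) * (vnorm (vsub a b))^2))).

Definition is_gradient {n} (f : Vec n -> R) (gf : Vec n -> Vec n) : Prop :=
  forall x : Vec n, forall eps, 0 < eps -> exists delta, 0 < delta /\
    forall h : Vec n, vnorm h < delta ->
      Rabs (f (vadd x h) - f x - dot (gf x) h) <= eps * vnorm h.

Definition lipschitz {n} (g : Vec n -> Vec n) (L : R) : Prop :=
  forall x y, vnorm (vsub (g x) (g y)) <= L * vnorm (vsub x y).

Definition Fobj {n} (f : Vec n -> R) (psi : Vec n -> ER) (x : Vec n) : ER :=
  ER_add (ERfin (f x)) (psi x).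

Definition assumption1 {n} (f : Vec n -> R) (gf : Vec n -> Vec n)
    (psi : Vec n -> ER) (L : R) : Prop :=
  0 < L /\ is_gradient f gf /\ lipschitz gf L /\
  convex_ext psi /\ proper_ext psi /\ closed_ext psi /\
  (exists b, forall x, ER_le (ERfin b) (Fobj f psi x)) /\
  (exists xs, forall x, ER_le (Fobj f psi xs) (Fobj f psi x)).

(* Q^x_H(d) = grad f(x)^T d + 1/2 d^T H d + psi(x+d) - psi(x)
   (meaningful for x in dom psi; +oo if x+d not in dom psi) *)
Definition Qfun {n} (gf : Vec n -> Vec n) (psi : Vec n -> ER) (x : Vec n)
    (H : Mat n) (d : Vec n) : ER :=
  match psi (vadd x d), psi x with
  | ERfin a, ERfin b => ERfin (dot (gf x) d + / 2 * quad H d + a - b)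
  | _, _ => ERinf
  end.

Definition is_ER_inf {n} (Q : Vec n -> ER) (qs : R) : Prop :=
  (forall d, ER_le (ERfin qs) (Q d)) /\
  (forall e, 0 < e -> exists d, ER_le (Q d) (ERfin (qs + e))).

(* eta-inexactness: Q(d) - Q_star <= eta (Q(0) - Q_star), i.e. Q(d) <= (1-eta) Q_star *)
Definition eta_inexact {n} (Q : Vec n -> ER) (eta : R) (d : Vec n) : Prop :=
  exists qs, is_ER_inf Q qs /\ ER_le (Q d) (ERfin ((1 - eta) * qs)).

Definition suff_dec {n} (f : Vec n -> R) (gf : Vec n -> Vec n) (psi : Vec n -> ER)
    (gamma : R) (x : Vec n) (H : Mat n) (d : Vec n) : Prop :=
  exists q Fx Fxd,
    Qfun gf psi x H d = ERfin q /\
    Fobj f psi x = ERfin Fx /\ Fobj f psi (vadd x d) = ERfin Fxd /\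
    Fx - Fxd >= - gamma * q /\ - gamma * q >= 0.

(* trial matrices of the backtracking loop, j = number of failed tests *)
Definition trialH1 {n} (H0 : Mat n) (beta : R) (j : nat) : Mat n :=
  mscal (/ beta ^ j) H0.
Definition trialH2 {n} (H0 : Mat n) (beta : R) (j : nat) : Mat n :=
  match j with
  | O => H0
  | S j' => madd H0 (mscal (/ beta ^ j') Id)
  end.

(* run of Algorithm 2 with trial-matrix rule [trial]:
   x k = iterates, H0 k = initial matrices, J k = accepted trial index,
   d k j = direction computed at the j-th trial of iteration k *)
Definition alg2_run {n} (f : Vec n -> R) (gf : Vec n -> Vec n) (psi : Vec n -> ER)
    (gamma eta : R) (trial : Mat n -> nat -> Mat n)
    (x : nat -> Vec n) (H0 : nat -> Mat n) (J : nat -> nat)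
    (d : nat -> nat -> Vec n) : Prop :=
  (forall k, symmetric (H0 k)) /\
  (forall k j, (j <= J k)%nat ->
      eta_inexact (Qfun gf psi (x k) (trial (H0 k) j)) eta (d k j)) /\
  (forall k j, (j < J k)%nat ->
      ~ suff_dec f gf psi gamma (x k) (trial (H0 k) j) (d k j)) /\
  (forall k, suff_dec f gf psi gamma (x k) (trial (H0 k) (J k)) (d k (J k))) /\
  (forall k, x (S k) = vadd (x k) (d k (J k))).

Definition Mtilde2 (L beta gamma eta m0 M0 : R) : R :=
  M0 + Rmax 1 (/ beta * (L * (1 + sqrt eta) / (2 - gamma * (1 - sqrt eta)) - m0)).
Definition Mtilde1 (L beta gamma eta m0 M0 : R) : R :=
  M0 * Rmax 1 (L * (1 + sqrt eta) / (beta * (2 - gamma * (1 - sqrt eta)) * m0)).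

From Stdlib Require Import Reals Lra Lia Psatz FunctionalExtensionality Classical.
From Stdlib Require Vectors.Fin.
Open Scope R_scope.

(* Part (i): [Q] is [sigma]-strongly convex with [Q(0) = 0], so comparing [Q(t d)] with [Q*]
   along the segment [0, d] and using [Q(d) <= (1 - eta) Q*] gives
   [sigma (1 - sqrt eta) / (1 + sqrt eta) |d|^2 <= - 2 Q(d)].  The descent lemma gives
   [F(x + d) <= F(x) + Q(d) + (L - lambda_min) |d|^2 / 2], and the hypothesis bounds the last
   term by [- (1 - gamma) Q(d)].  Since [lambda_min] is defined through eigenvectors, this needs
   [lambda_min |v|^2 <= v^T H v], i.e. that the infimum of the Rayleigh quotient is an
   eigenvalue; that rests on the fact that a positive semidefinite matrix with trivial kernel
   is coercive, proved by induction on the dimension through Schur complements.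
   Part (ii): once [lambda_min(H) >= L (1 + sqrt eta) / (2 - gamma (1 - sqrt eta))], [Q] is
   [lambda_min]-strongly convex and part (i) applies with [sigma = lambda_min].  Hence every
   rejected trial matrix lies below this threshold, and the accepted one is at most one
   backtracking step beyond a rejected one (or is one of the first trials [H0], [H0 + I]). *)

(** * Vectors, matrices and quadratic forms *)

Lemma vsum_ext {n} (g h : Fin.t n -> R) : (forall i, g i = h i) -> vsum n g = vsum n h.
Proof. intros E. f_equal. apply functional_extensionality; auto. Qed.

Lemma vsum_zero n : vsum n (fun _ => 0) = 0.
Proof. induction n; simpl; [|rewrite IHn]; lra. Qed.

Lemma vsum_plus {n} (g h : Fin.t n -> R) :
  vsum n (fun i => g i + h i) = vsum n g + vsum n h.
Proof. induction n; simpl; [|rewrite IHn]; lra. Qed.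

Lemma vsum_scal {n} c (g : Fin.t n -> R) : vsum n (fun i => c * g i) = c * vsum n g.
Proof. induction n; simpl; [|rewrite (IHn (fun i => g (Fin.FS i)))]; lra. Qed.

Lemma vsum_opp {n} (g : Fin.t n -> R) : vsum n (fun i => - g i) = - vsum n g.
Proof. induction n; simpl; [|rewrite (IHn (fun i => g (Fin.FS i)))]; lra. Qed.

Lemma vsum_le {n} (g h : Fin.t n -> R) : (forall i, g i <= h i) -> vsum n g <= vsum n h.
Proof.
  induction n; simpl; intros E; [lra|].
  pose proof (E Fin.F1).
  pose proof (IHn (fun i => g (Fin.FS i)) (fun i => h (Fin.FS i)) (fun i => E (Fin.FS i))).
  lra.
Qed.

Lemma vsum_nonneg {n} (g : Fin.t n -> R) : (forall i, 0 <= g i) -> 0 <= vsum n g.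
Proof. intros E. rewrite <- (vsum_zero n). apply vsum_le; auto. Qed.

Lemma vsum_swap n m (g : Fin.t n -> Fin.t m -> R) :
  vsum n (fun i => vsum m (fun j => g i j)) = vsum m (fun j => vsum n (fun i => g i j)).
Proof.
  induction n; simpl; [symmetry; apply vsum_zero|].
  rewrite IHn, <- vsum_plus. reflexivity.
Qed.

Lemma vsum_kronecker {n} (i : Fin.t n) (v : Vec n) :
  vsum n (fun j => (if Fin.eq_dec i j then 1 else 0) * v j) = v i.
Proof.
  induction n; [inversion i|]. simpl.
  pattern i; apply Fin.caseS'.
  - destruct (Fin.eq_dec Fin.F1 Fin.F1) as [_|C]; [|now elim C].
    transitivity (1 * v Fin.F1 + vsum n (fun _ => 0)); [|rewrite vsum_zero; lra].
    f_equal. apply vsum_ext. intro j.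
    destruct (Fin.eq_dec Fin.F1 (Fin.FS j)) as [E|_]; [inversion E | lra].
  - intro p. destruct (Fin.eq_dec (Fin.FS p) Fin.F1) as [E|_]; [inversion E|].
    rewrite <- (IHn p (fun j => v (Fin.FS j))), Rmult_0_l, Rplus_0_l.
    apply vsum_ext. intro j.
    destruct (Fin.eq_dec (Fin.FS p) (Fin.FS j)) as [E|E], (Fin.eq_dec p j) as [E'|E'];
      subst; auto.
    + apply Fin.FS_inj in E. contradiction.
    + contradiction.
Qed.

Lemma dot_comm {n} (u v : Vec n) : dot u v = dot v u.
Proof. apply vsum_ext. intros; lra. Qed.

Lemma dot_add_l {n} (u v w : Vec n) : dot (vadd u v) w = dot u w + dot v w.
Proof. unfold dot, vadd. rewrite <- vsum_plus. apply vsum_ext. intros; lra. Qed.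

Lemma dot_add_r {n} (u v w : Vec n) : dot w (vadd u v) = dot w u + dot w v.
Proof. rewrite dot_comm, dot_add_l, (dot_comm u), (dot_comm v). auto. Qed.

Lemma dot_sub_l {n} (u v w : Vec n) : dot (vsub u v) w = dot u w - dot v w.
Proof.
  unfold dot, vsub, Rminus. rewrite <- vsum_opp, <- vsum_plus. apply vsum_ext. intros; lra.
Qed.

Lemma dot_sub_r {n} (u v w : Vec n) : dot w (vsub u v) = dot w u - dot w v.
Proof. rewrite dot_comm, dot_sub_l, (dot_comm u), (dot_comm v). auto. Qed.

Lemma dot_scal_l {n} c (u w : Vec n) : dot (vscal c u) w = c * dot u w.
Proof. unfold dot, vscal. rewrite <- vsum_scal. apply vsum_ext. intros; lra. Qed.

Lemma dot_scal_r {n} c (u w : Vec n) : dot w (vscal c u) = c * dot w u.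
Proof. rewrite dot_comm, dot_scal_l, dot_comm. auto. Qed.

Lemma dot_zero_r {n} (u : Vec n) : dot u vzero = 0.
Proof. rewrite <- (vsum_zero n). apply vsum_ext. intros; unfold vzero; lra. Qed.

Lemma dot_zero_l {n} (u : Vec n) : dot vzero u = 0.
Proof. rewrite dot_comm. apply dot_zero_r. Qed.

Lemma dot_self_nonneg {n} (u : Vec n) : 0 <= dot u u.
Proof. apply vsum_nonneg. intros; nra. Qed.

Lemma mv_add {n} (H : Mat n) u v : mv H (vadd u v) = vadd (mv H u) (mv H v).
Proof. apply functional_extensionality; intro i. apply dot_add_r. Qed.

Lemma mv_sub {n} (H : Mat n) u v : mv H (vsub u v) = vsub (mv H u) (mv H v).
Proof. apply functional_extensionality; intro i. apply dot_sub_r. Qed.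

Lemma mv_scal {n} (H : Mat n) c u : mv H (vscal c u) = vscal c (mv H u).
Proof. apply functional_extensionality; intro i. apply dot_scal_r. Qed.

Lemma mv_madd {n} (A B : Mat n) v : mv (madd A B) v = vadd (mv A v) (mv B v).
Proof. apply functional_extensionality; intro i. apply (dot_add_l (A i) (B i)). Qed.

Lemma mv_mscal {n} c (A : Mat n) v : mv (mscal c A) v = vscal c (mv A v).
Proof. apply functional_extensionality; intro i. apply (dot_scal_l c (A i)). Qed.

Lemma mv_Id {n} (v : Vec n) : mv Id v = v.
Proof. apply functional_extensionality; intro i. apply vsum_kronecker. Qed.

Lemma dot_mv_symmetric {n} (H : Mat n) u v : symmetric H -> dot u (mv H v) = dot v (mv H u).
Proof.
  intros Hsym. unfold mv, dot.
  transitivity (vsum n (fun i => vsum n (fun j => u i * H i j * v j))).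
  - apply vsum_ext; intro i. rewrite <- vsum_scal. apply vsum_ext; intro j. lra.
  - rewrite vsum_swap. apply vsum_ext; intro j. rewrite <- vsum_scal.
    apply vsum_ext; intro i. rewrite (Hsym i j). lra.
Qed.

Lemma quad_add {n} (H : Mat n) u v : symmetric H ->
  quad H (vadd u v) = quad H u + quad H v + 2 * dot u (mv H v).
Proof.
  intros Hsym. unfold quad.
  rewrite mv_add, dot_add_l, !dot_add_r, (dot_mv_symmetric H v u Hsym). lra.
Qed.

Lemma quad_sub {n} (H : Mat n) u v : symmetric H ->
  quad H (vsub u v) = quad H u + quad H v - 2 * dot u (mv H v).
Proof.
  intros Hsym. unfold quad.
  rewrite mv_sub, dot_sub_l, !dot_sub_r, (dot_mv_symmetric H v u Hsym). lra.
Qed.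

Lemma quad_scal {n} (H : Mat n) c u : quad H (vscal c u) = c * c * quad H u.
Proof. unfold quad. rewrite mv_scal, dot_scal_l, dot_scal_r. lra. Qed.

Lemma quad_zero {n} (H : Mat n) : quad H vzero = 0.
Proof. apply dot_zero_l. Qed.

Lemma quad_madd {n} (A B : Mat n) v : quad (madd A B) v = quad A v + quad B v.
Proof. unfold quad. rewrite mv_madd. apply dot_add_r. Qed.

Lemma quad_mscal {n} c (A : Mat n) v : quad (mscal c A) v = c * quad A v.
Proof. unfold quad. rewrite mv_mscal. apply dot_scal_r. Qed.

Lemma quad_Id {n} (v : Vec n) : quad Id v = dot v v.
Proof. unfold quad. rewrite mv_Id. auto. Qed.

Lemma symmetric_Id n : symmetric (@Id n).
Proof.
  intros i j. unfold Id.
  destruct (Fin.eq_dec i j), (Fin.eq_dec j i); subst; auto; congruence.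
Qed.

Lemma symmetric_madd {n} (A B : Mat n) : symmetric A -> symmetric B -> symmetric (madd A B).
Proof. intros SA SB i j. unfold madd. rewrite SA, SB. auto. Qed.

Lemma symmetric_mscal {n} c (A : Mat n) : symmetric A -> symmetric (mscal c A).
Proof. intros SA i j. unfold mscal. rewrite SA. auto. Qed.

Lemma vnorm_sq {n} (v : Vec n) : vnorm v ^ 2 = dot v v.
Proof. apply pow2_sqrt, dot_self_nonneg. Qed.

Lemma vnorm_scal {n} c (v : Vec n) : vnorm (vscal c v) = Rabs c * vnorm v.
Proof.
  unfold vnorm. rewrite dot_scal_l, dot_scal_r, <- Rmult_assoc, sqrt_mult_alt by nra.
  rewrite <- sqrt_Rsqr_abs. reflexivity.
Qed.

Lemma quadratic_nonneg_discr a b c :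
  0 <= a -> (forall k, 0 <= a * k * k + b * k + c) -> b * b <= 4 * a * c.
Proof.
  intros Ha Hk. destruct (Req_dec a 0) as [Z|Z].
  - subst. destruct (Req_dec b 0) as [B|B]; [subst; lra|]. exfalso.
    specialize (Hk (- (Rabs c + 1) / b)).
    replace (0 * (- (Rabs c + 1) / b) * (- (Rabs c + 1) / b) + b * (- (Rabs c + 1) / b) + c)
      with (- (Rabs c + 1) + c) in Hk by (field; auto).
    pose proof (Rle_abs c). lra.
  - specialize (Hk (- b / (2 * a))).
    replace (a * (- b / (2 * a)) * (- b / (2 * a)) + b * (- b / (2 * a)) + c)
      with ((4 * a * c - b * b) / (4 * a)) in Hk by (field; auto).
    apply Rmult_le_compat_r with (r := 4 * a) in Hk; [|lra].
    unfold Rdiv in Hk. rewrite Rmult_assoc, Rinv_l in Hk by lra. lra.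
Qed.

Lemma cauchy_schwarz_sq {n} (u v : Vec n) : dot u v * dot u v <= dot u u * dot v v.
Proof.
  assert (Q := quadratic_nonneg_discr (dot v v) (- 2 * dot u v) (dot u u) (dot_self_nonneg v)).
  enough (dot u v * dot u v * 4 <= 4 * dot v v * dot u u) by nra.
  replace (dot u v * dot u v * 4) with ((- 2 * dot u v) * (- 2 * dot u v)) by ring.
  apply Q. intro k. pose proof (dot_self_nonneg (vsub u (vscal k v))) as P.
  rewrite dot_sub_l, !dot_sub_r, !dot_scal_l, !dot_scal_r, (dot_comm v u) in P. nra.
Qed.

Lemma cauchy_schwarz {n} (u v : Vec n) : dot u v <= vnorm u * vnorm v.
Proof.
  unfold vnorm. rewrite <- sqrt_mult_alt by apply dot_self_nonneg.
  apply Rle_trans with (Rabs (dot u v)); [apply Rle_abs|].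
  rewrite <- sqrt_Rsqr_abs. apply sqrt_le_1_alt, cauchy_schwarz_sq.
Qed.

(** * Sufficient decrease *)

Lemma derivable_pt_lim_along_line {n} (f : Vec n -> R) gf (x d : Vec n) t :
  is_gradient f gf ->
  derivable_pt_lim (fun s => f (vadd x (vscal s d))) t (dot (gf (vadd x (vscal t d))) d).
Proof.
  intros G eps Heps.
  set (y := vadd x (vscal t d)).
  set (N := vnorm d + 1).
  assert (HN : 0 < N) by (unfold N; pose proof (sqrt_pos (dot d d)); fold (vnorm d) in *; lra).
  destruct (G y (eps / (2 * N))) as [delta [Hd Hb]]; [apply Rdiv_lt_0_compat; lra|].
  assert (Hdp : 0 < delta / N) by (apply Rdiv_lt_0_compat; lra).
  exists (mkposreal _ Hdp). simpl. intros h Hh0 Hh.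
  assert (Hv : vnorm (vscal h d) < delta).
  { rewrite vnorm_scal. apply Rle_lt_trans with (Rabs h * N).
    - apply Rmult_le_compat_l; [apply Rabs_pos | unfold N; lra].
    - apply Rmult_lt_reg_r with (/ N); [apply Rinv_0_lt_compat; lra|].
      rewrite Rmult_assoc, Rinv_r, Rmult_1_r by lra. exact Hh. }
  specialize (Hb _ Hv).
  replace (vadd y (vscal h d)) with (vadd x (vscal (t + h) d)) in Hb
    by (apply functional_extensionality; intro i; unfold y, vadd, vscal; ring).
  rewrite dot_scal_r, vnorm_scal in Hb.
  replace ((f (vadd x (vscal (t + h) d)) - f y) / h - dot (gf y) d)
    with ((f (vadd x (vscal (t + h) d)) - f y - h * dot (gf y) d) / h) by (field; auto).
  unfold Rdiv at 1. rewrite Rabs_mult, Rabs_inv.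
  assert (Ha : 0 < Rabs h) by (apply Rabs_pos_lt; auto).
  apply Rle_lt_trans with (eps / (2 * N) * (Rabs h * vnorm d) * / Rabs h).
  - apply Rmult_le_compat_r; [left; apply Rinv_0_lt_compat; lra | exact Hb].
  - replace (eps / (2 * N) * (Rabs h * vnorm d) * / Rabs h) with (eps * vnorm d / (2 * N))
      by (field; lra).
    apply Rmult_lt_reg_r with (2 * N); [lra|].
    unfold Rdiv. rewrite Rmult_assoc, Rinv_l by lra.
    unfold N. pose proof (sqrt_pos (dot d d)). fold (vnorm d) in *. nra.
Qed.

(* Mean value theorem for [s |-> f(x + s d) - s (grad f(x) . d) - L/2 s^2 |d|^2] on [0, 1]. *)
Lemma descent_lemma {n} (f : Vec n -> R) gf L (x d : Vec n) :
  is_gradient f gf -> lipschitz gf L ->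
  f (vadd x d) <= f x + dot (gf x) d + L / 2 * dot d d.
Proof.
  intros G Lip.
  set (l0 := dot (gf x) d).
  set (D := dot d d).
  set (g := fun s => f (vadd x (vscal s d)) - l0 * s - L / 2 * D * (s * s)).
  assert (Hg : forall c, 0 <= c <= 1 -> derivable_pt_lim g c
     (dot (gf (vadd x (vscal c d))) d - l0 * 1 - L / 2 * D * (1 * c + c * 1))).
  { intros c _.
    apply derivable_pt_lim_minus; [apply derivable_pt_lim_minus|].
    - apply derivable_pt_lim_along_line, G.
    - apply derivable_pt_lim_scal, derivable_pt_lim_id.
    - apply derivable_pt_lim_scal, (derivable_pt_lim_mult id id);
        apply derivable_pt_lim_id. }
  destruct (MVT_cor2 g _ 0 1 Rlt_0_1 Hg) as [c [Ec Hc]].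
  assert (Hslope : dot (gf (vadd x (vscal c d))) d - l0 <= L * c * D).
  { unfold l0. rewrite <- dot_sub_l.
    eapply Rle_trans; [apply cauchy_schwarz|].
    pose proof (Lip (vadd x (vscal c d)) x) as Lp.
    replace (vsub (vadd x (vscal c d)) x) with (vscal c d) in Lp
      by (apply functional_extensionality; intro i; unfold vsub, vadd, vscal; ring).
    rewrite vnorm_scal, Rabs_pos_eq in Lp by lra.
    apply Rle_trans with (L * (c * vnorm d) * vnorm d).
    - apply Rmult_le_compat_r; [apply sqrt_pos | exact Lp].
    - unfold D. rewrite <- vnorm_sq. nra. }
  assert (Hg10 : g 1 <= g 0) by nra.
  unfold g in Hg10.
  replace (vadd x (vscal 0 d)) with x in Hg10
    by (apply functional_extensionality; intro i; unfold vadd, vscal; ring).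
  replace (vadd x (vscal 1 d)) with (vadd x d) in Hg10
    by (apply functional_extensionality; intro i; unfold vadd, vscal; ring).
  lra.
Qed.

Lemma le_of_forall_lt_1_mult a b : (forall t, 0 < t < 1 -> t * a <= b) -> a <= b.
Proof.
  intros Ht. destruct (Rle_dec a b) as [Ok|Hab]; [exact Ok|]. exfalso.
  destruct (Rle_dec a 0) as [Ha|Ha]; [pose proof (Ht (/ 2)); lra|].
  destruct (Rle_dec b 0) as [Hb|Hb]; [pose proof (Ht (/ 2)); lra|].
  assert (Hq : 0 < (a + b) / (2 * a) < 1).
  { split; [apply Rdiv_lt_0_compat; lra|].
    apply Rmult_lt_reg_r with (2 * a); [lra|]. unfold Rdiv.
    rewrite Rmult_assoc, Rinv_l; lra. }
  specialize (Ht _ Hq). replace ((a + b) / (2 * a) * a) with ((a + b) / 2) in Ht by (field; lra).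
  lra.
Qed.

(* With [s = sqrt eta], [p = - Q*] and [r = - Q(d)]: the hypothesis on [t] compares
   [Q(t d)] with [Q*], and the choice [t = 1 / (1 + s)] is optimal. *)
Lemma inexact_gap_bound s sigma p r D :
  0 <= s < 1 -> (1 - s * s) * p <= r ->
  (forall t, 0 < t < 1 -> sigma / 2 * t * (1 - t) * D <= p - t * r) ->
  sigma * (1 - s) * D <= 2 * (1 + s) * r.
Proof.
  intros Hs Hr Ht. destruct (Req_dec s 0) as [Z|Z].
  - subst s. rewrite Rminus_0_r, Rplus_0_r, !Rmult_1_r.
    enough (sigma * D / 2 <= r) by lra.
    apply le_of_forall_lt_1_mult. intros t Htt. specialize (Ht t Htt).
    apply Rmult_le_reg_r with (1 - t); [lra|]. nra.
  - assert (Hs0 : 0 < s) by lra.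
    assert (Ht1 : 0 < 1 / (1 + s) < 1).
    { split; [apply Rdiv_lt_0_compat; lra|].
      apply Rmult_lt_reg_r with (1 + s); [lra|]. unfold Rdiv.
      rewrite Rmult_assoc, Rinv_l; lra. }
    specialize (Ht _ Ht1).
    assert (K : sigma * s * D <= 2 * (1 + s) * ((1 + s) * p - r)).
    { apply Rmult_le_compat_r with (r := 2 * (1 + s) * (1 + s)) in Ht; [|nra].
      replace (sigma / 2 * (1 / (1 + s)) * (1 - 1 / (1 + s)) * D * (2 * (1 + s) * (1 + s)))
        with (sigma * s * D) in Ht by (field; lra).
      replace ((p - 1 / (1 + s) * r) * (2 * (1 + s) * (1 + s)))
        with (2 * (1 + s) * ((1 + s) * p - r)) in Ht by (field; lra).
      exact Ht. }
    apply Rmult_le_reg_l with s; [exact Hs0|].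
    assert (0 <= 1 - s) by lra.
    assert (K' : (1 - s) * (sigma * s * D) <= (1 - s) * (2 * (1 + s) * ((1 + s) * p - r)))
      by (apply Rmult_le_compat_l; assumption).
    nra.
Qed.

Lemma strongly_convex_inexact_bound {n} (Q : Vec n -> ER) sigma eta qs q (d : Vec n) :
  0 <= eta < 1 -> strongly_convex sigma Q -> Q vzero = ERfin 0 -> is_ER_inf Q qs ->
  Q d = ERfin q -> q <= (1 - eta) * qs ->
  sigma * (1 - sqrt eta) * dot d d <= 2 * (1 + sqrt eta) * - q.
Proof.
  intros He SC Q0 [Hinf _] Qd Hq.
  apply (inexact_gap_bound _ _ (- qs)).
  - split; [apply sqrt_pos|]. rewrite <- sqrt_1. apply sqrt_lt_1_alt. lra.
  - rewrite sqrt_sqrt by lra. lra.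
  - intros t Ht. specialize (SC d vzero t Ht). specialize (Hinf (vscal t d)).
    replace (vadd (vscal t d) (vscal (1 - t) vzero)) with (vscal t d) in SC
      by (apply functional_extensionality; intro i; unfold vadd, vscal, vzero; ring).
    replace (vsub d vzero) with d in SC
      by (apply functional_extensionality; intro i; unfold vsub, vzero; ring).
    rewrite Qd, Q0, vnorm_sq in SC.
    destruct (Q (vscal t d)); simpl in SC, Hinf; [lra | contradiction].
Qed.

Lemma Qfun_vzero {n} gf psi (x : Vec n) H : dom psi x -> Qfun gf psi x H vzero = ERfin 0.
Proof.
  intros Hdom. unfold Qfun.
  replace (vadd x vzero) with x
    by (apply functional_extensionality; intro i; unfold vadd, vzero; ring).
  destruct (psi x) eqn:E; [|congruence].
  rewrite quad_zero, dot_zero_r. f_equal. ring.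
Qed.

Lemma suff_dec_of_rayleigh_bound {n} (f : Vec n -> R) gf psi L gamma x (H : Mat n)
    sigma eta lam d :
  is_gradient f gf -> lipschitz gf L -> 0 < gamma <= 1 -> dom psi x ->
  strongly_convex sigma (Qfun gf psi x H) -> 0 <= eta < 1 ->
  eta_inexact (Qfun gf psi x H) eta d ->
  (forall v, lam * dot v v <= quad H v) ->
  (1 - gamma) * ((1 - sqrt eta) / (1 + sqrt eta)) * sigma + lam >= L ->
  suff_dec f gf psi gamma x H d.
Proof.
  intros G Lip Hg Hdom SC Heta [qs [Hqs Hd]] Hlam HL.
  pose proof (Qfun_vzero gf psi x H Hdom) as Q0.
  destruct (psi x) as [b|] eqn:Ex; [|contradiction].
  destruct (psi (vadd x d)) as [a|] eqn:Ed;
    [|unfold Qfun in Hd; rewrite Ed in Hd; destruct Hd].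
  set (q := dot (gf x) d + / 2 * quad H d + a - b).
  assert (Qd : Qfun gf psi x H d = ERfin q) by (unfold Qfun; rewrite Ed, Ex; reflexivity).
  rewrite Qd in Hd. simpl in Hd.
  assert (Hqs0 : qs <= 0) by (pose proof (proj1 Hqs vzero) as P; rewrite Q0 in P; exact P).
  assert (Hq0 : q <= 0) by nra.
  pose proof (strongly_convex_inexact_bound _ _ _ _ _ _ Heta SC Q0 Hqs Qd Hd) as Hnorm.
  assert (Hs : 0 <= sqrt eta) by apply sqrt_pos.
  assert (HD : 0 <= dot d d) by apply dot_self_nonneg.
  assert (Hexcess : (L - lam) * dot d d <= 2 * (1 - gamma) * - q).
  { destruct (Rle_dec (L - lam) 0) as [N|P].
    - assert ((L - lam) * dot d d <= 0) by nra. nra.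
    - apply Rle_trans with ((1 - gamma) * ((1 - sqrt eta) / (1 + sqrt eta)) * sigma * dot d d);
        [apply Rmult_le_compat_r; lra|].
      replace ((1 - gamma) * ((1 - sqrt eta) / (1 + sqrt eta)) * sigma * dot d d)
        with ((1 - gamma) / (1 + sqrt eta) * (sigma * (1 - sqrt eta) * dot d d))
        by (field; lra).
      replace (2 * (1 - gamma) * - q)
        with ((1 - gamma) / (1 + sqrt eta) * (2 * (1 + sqrt eta) * - q))
        by (field; lra).
      apply Rmult_le_compat_l; [|exact Hnorm].
      apply Rmult_le_pos; [lra | left; apply Rinv_0_lt_compat; lra]. }
  pose proof (descent_lemma f gf L x d G Lip).
  pose proof (Hlam d).
  exists q, (f x + b), (f (vadd x d) + a).
  unfold Fobj. rewrite Ex, Ed.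
  repeat split; [exact Qd| |nra].
  unfold q in *. lra.
Qed.

Lemma Qfun_strongly_convex {n} (gf : Vec n -> Vec n) psi x (H : Mat n) lam :
  convex_ext psi -> symmetric H -> (forall v, lam * dot v v <= quad H v) ->
  strongly_convex lam (Qfun gf psi x H).
Proof.
  intros Cv Hsym Hl a c t Ht.
  set (w := vadd (vscal t a) (vscal (1 - t) c)).
  specialize (Cv (vadd x a) (vadd x c) t Ht).
  replace (vadd (vscal t (vadd x a)) (vscal (1 - t) (vadd x c))) with (vadd x w) in Cv
    by (apply functional_extensionality; intro i; unfold w, vadd, vscal; ring).
  unfold Qfun.
  destruct (psi x) as [b|]; destruct (psi (vadd x w)) as [pw|];
   destruct (psi (vadd x a)) as [pa|]; destruct (psi (vadd x c)) as [pc|];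
   simpl in *; auto.
  assert (Eg : dot (gf x) w = t * dot (gf x) a + (1 - t) * dot (gf x) c)
    by (unfold w; rewrite dot_add_r, !dot_scal_r; ring).
  assert (Eq : quad H w = t * quad H a + (1 - t) * quad H c - t * (1 - t) * quad H (vsub a c))
    by (unfold w; rewrite quad_add, !quad_scal, quad_sub, mv_scal, dot_scal_l, dot_scal_r
          by assumption; ring).
  replace (vnorm (vsub a c) * (vnorm (vsub a c) * 1)) with (vnorm (vsub a c) ^ 2) by ring.
  rewrite vnorm_sq, Eg, Eq.
  assert (t * (1 - t) * (lam * dot (vsub a c) (vsub a c)) <= t * (1 - t) * quad H (vsub a c))
    by (apply Rmult_le_compat_l; [nra | apply Hl]).
  lra.
Qed.

Definition accept_threshold (L gamma eta : R) : R :=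
  L * (1 + sqrt eta) / (2 - gamma * (1 - sqrt eta)).

Lemma accept_threshold_pos L gamma eta :
  0 < L -> 0 < gamma <= 1 -> 0 <= eta < 1 -> 0 < accept_threshold L gamma eta.
Proof.
  intros. pose proof (sqrt_pos eta).
  assert (sqrt eta < 1) by (rewrite <- sqrt_1; apply sqrt_lt_1_alt; lra).
  apply Rdiv_lt_0_compat; nra.
Qed.

Lemma suff_dec_above_threshold {n} (f : Vec n -> R) gf psi L gamma eta x (H : Mat n) lam d :
  assumption1 f gf psi L -> 0 < gamma <= 1 -> 0 <= eta < 1 -> dom psi x -> symmetric H ->
  (forall v, lam * dot v v <= quad H v) -> accept_threshold L gamma eta <= lam ->
  eta_inexact (Qfun gf psi x H) eta d -> suff_dec f gf psi gamma x H d.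
Proof.
  intros [HL [G [Lip [Cv _]]]] Hg He Hdom Hsym Hq Hl Hin.
  pose proof (accept_threshold_pos L gamma eta HL Hg He).
  pose proof (sqrt_pos eta).
  assert (sqrt eta < 1) by (rewrite <- sqrt_1; apply sqrt_lt_1_alt; lra).
  apply (suff_dec_of_rayleigh_bound f gf psi L gamma x H lam eta lam d G Lip Hg Hdom
           (Qfun_strongly_convex gf psi x H lam Cv Hsym Hq) He Hin Hq).
  unfold accept_threshold in Hl.
  replace ((1 - gamma) * ((1 - sqrt eta) / (1 + sqrt eta)) * lam + lam)
    with (lam * (2 - gamma * (1 - sqrt eta)) / (1 + sqrt eta)) by (field; lra).
  apply Rle_ge, Rmult_le_reg_r with (1 + sqrt eta); [lra|].
  apply Rmult_le_compat_r with (r := 2 - gamma * (1 - sqrt eta)) in Hl; [|nra].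
  replace (L * (1 + sqrt eta) / (2 - gamma * (1 - sqrt eta)) * (2 - gamma * (1 - sqrt eta)))
    with (L * (1 + sqrt eta)) in Hl by (field; nra).
  replace (lam * (2 - gamma * (1 - sqrt eta)) / (1 + sqrt eta) * (1 + sqrt eta))
    with (lam * (2 - gamma * (1 - sqrt eta))) by (field; lra).
  lra.
Qed.

(** * Smallest eigenvalue and the Rayleigh quotient *)

Definition vtl {m} (v : Vec (S m)) : Vec m := fun j => v (Fin.FS j).
Definition vcons {m} (a : R) (w : Vec m) : Vec (S m) :=
  fun i => Fin.caseS' i (fun _ => R) a w.

Lemma vcons_vtl {m} (v : Vec (S m)) : vcons (v Fin.F1) (vtl v) = v.
Proof. apply functional_extensionality. intro i. pattern i; apply Fin.caseS'; reflexivity. Qed.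

Lemma dot_S {m} (u v : Vec (S m)) : dot u v = u Fin.F1 * v Fin.F1 + dot (vtl u) (vtl v).
Proof. reflexivity. Qed.

Lemma dot_self_eq0 {n} (v : Vec n) : dot v v = 0 -> forall i, v i = 0.
Proof.
  induction n; intros Z i; [inversion i|].
  rewrite dot_S in Z. pose proof (dot_self_nonneg (vtl v)).
  assert (v Fin.F1 * v Fin.F1 = 0) by nra.
  assert (Zt : dot (vtl v) (vtl v) = 0) by nra.
  pattern i; apply Fin.caseS'; [nra|]. intro p. apply (IHn (vtl v) Zt p).
Qed.

Lemma dot_self_pos {n} (v : Vec n) : (exists i, v i <> 0) -> 0 < dot v v.
Proof.
  intros [i Hi]. destruct (dot_self_nonneg v) as [P|Z]; [exact P|].
  exfalso. apply Hi, dot_self_eq0. auto.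
Qed.

Section PivotBlocks.

Variables (m : nat) (A : Mat (S m)).

Definition pivot : R := A Fin.F1 Fin.F1.
Definition pivot_col : Vec m := fun j => A Fin.F1 (Fin.FS j).
Definition minor : Mat m := fun i j => A (Fin.FS i) (Fin.FS j).
Definition schur : Mat m := fun i j => minor i j - pivot_col i * pivot_col j / pivot.

Hypothesis A_sym : symmetric A.

Lemma mv_vcons_F1 t w : mv A (vcons t w) Fin.F1 = pivot * t + dot pivot_col w.
Proof. reflexivity. Qed.

Lemma mv_vcons_FS t w i : mv A (vcons t w) (Fin.FS i) = pivot_col i * t + mv minor w i.
Proof.
  unfold mv at 1. rewrite dot_S. unfold pivot_col. rewrite (A_sym (Fin.FS i)). reflexivity.
Qed.

Lemma quad_vcons t w :
  quad A (vcons t w) = pivot * (t * t) + 2 * t * dot pivot_col w + quad minor w.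
Proof.
  unfold quad at 1. rewrite dot_S, mv_vcons_F1.
  replace (vtl (mv A (vcons t w))) with (vadd (vscal t pivot_col) (mv minor w))
    by (apply functional_extensionality; intro i; unfold vtl; rewrite mv_vcons_FS;
        unfold vadd, vscal; ring).
  rewrite dot_add_r, dot_scal_r, (dot_comm _ pivot_col).
  change (vcons t w Fin.F1) with t. change (vtl (vcons t w)) with w. unfold quad. ring.
Qed.

Lemma symmetric_schur : symmetric schur.
Proof.
  intros i j. unfold schur, minor.
  rewrite (A_sym (Fin.FS i)), (Rmult_comm (pivot_col i)). reflexivity.
Qed.

Hypothesis pivot_neq0 : pivot <> 0.

Lemma mv_schur w : mv schur w = vsub (mv minor w) (vscal (dot pivot_col w / pivot) pivot_col).
Proof.
  apply functional_extensionality; intro i. unfold mv at 1.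
  replace (schur i) with (vsub (minor i) (vscal (pivot_col i / pivot) pivot_col))
    by (apply functional_extensionality; intro j; unfold schur, vsub, vscal; field; auto).
  rewrite dot_sub_l, dot_scal_l. unfold vsub, vscal, mv. field. auto.
Qed.

Lemma quad_schur w : quad schur w = quad minor w - dot pivot_col w * dot pivot_col w / pivot.
Proof.
  unfold quad at 1. rewrite mv_schur, dot_sub_r, dot_scal_r, (dot_comm w pivot_col).
  unfold quad. field. auto.
Qed.

Lemma quad_vcons_schur t w :
  quad A (vcons t w)
  = pivot * ((t + dot pivot_col w / pivot) * (t + dot pivot_col w / pivot)) + quad schur w.
Proof. rewrite quad_vcons, quad_schur. field. auto. Qed.

End PivotBlocks.

Lemma psd_pivot_zero_kernel {m} (A : Mat (S m)) :
  symmetric A -> (forall v, 0 <= quad A v) -> pivot m A = 0 ->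
  forall i, mv A (vcons 1 vzero) i = 0.
Proof.
  intros Asym P Z.
  assert (Hcol : dot (pivot_col m A) (pivot_col m A) = 0).
  { assert (Hk : forall t, 0 <= 0 * t * t + 2 * dot (pivot_col m A) (pivot_col m A) * t
                                + quad (minor m A) (pivot_col m A)).
    { intro t. pose proof (P (vcons t (pivot_col m A))) as Pt.
      rewrite quad_vcons, Z in Pt by exact Asym. lra. }
    pose proof (quadratic_nonneg_discr _ _ _ (Rle_refl 0) Hk). nra. }
  pose proof (dot_self_eq0 _ Hcol) as Hcol0.
  intro i. pattern i; apply Fin.caseS'.
  - rewrite mv_vcons_F1, Z, dot_zero_r. ring.
  - intro p. rewrite mv_vcons_FS, Hcol0 by exact Asym. unfold mv. rewrite dot_zero_r. ring.
Qed.

(* Write [v = (t, w)] and [beta = b.w / a]; then [t^2 <= 2 (t + beta)^2 + 2 beta^2] and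
   [beta^2 <= |b|^2 / a^2 |w|^2] by Cauchy-Schwarz. *)
Lemma coercive_of_schur {m} (A : Mat (S m)) c' :
  symmetric A -> 0 < pivot m A -> 0 < c' ->
  (forall w, c' * dot w w <= quad (schur m A) w) ->
  exists c, 0 < c /\ forall v, c * dot v v <= quad A v.
Proof.
  intros Asym Ha Hc' Hschur.
  set (a := pivot m A). set (b := pivot_col m A) in *. fold a in Ha.
  set (K := dot b b / (a * a)).
  assert (HK : 0 <= K)
    by (apply Rmult_le_pos; [apply dot_self_nonneg | left; apply Rinv_0_lt_compat; nra]).
  set (c := Rmin (a / 2) (c' / (1 + 2 * K))).
  assert (Hc1 : c <= a / 2) by apply Rmin_l.
  assert (Hc2 : c * (1 + 2 * K) <= c').
  { assert (Hc : c <= c' / (1 + 2 * K)) by apply Rmin_r.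
    apply Rmult_le_compat_r with (r := 1 + 2 * K) in Hc; [|lra].
    replace (c' / (1 + 2 * K) * (1 + 2 * K)) with c' in Hc by (field; lra). exact Hc. }
  assert (Hc0 : 0 < c) by (apply Rmin_glb_lt; [lra | apply Rdiv_lt_0_compat; lra]).
  exists c. split; [exact Hc0|].
  intro v. rewrite <- (vcons_vtl v). set (t := v Fin.F1). set (w := vtl v).
  rewrite quad_vcons_schur by (auto; fold a; lra). rewrite dot_S.
  change (vcons t w Fin.F1) with t. change (vtl (vcons t w)) with w. fold a b.
  set (beta := dot b w / a).
  assert (Hbeta : beta * beta <= K * dot w w).
  { unfold beta, K.
    replace (dot b w / a * (dot b w / a)) with (dot b w * dot b w / (a * a)) by (field; lra).
    replace (dot b b / (a * a) * dot w w) with (dot b b * dot w w / (a * a)) by (field; lra).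
    apply Rmult_le_compat_r; [left; apply Rinv_0_lt_compat; nra | apply cauchy_schwarz_sq]. }
  pose proof (Hschur w).
  pose proof (dot_self_nonneg w).
  assert (Ht : t * t <= 2 * ((t + beta) * (t + beta)) + 2 * (beta * beta))
    by (pose proof (Rle_0_sqr (t + 2 * beta)); unfold Rsqr in *; lra).
  assert (c * (t * t) <= c * (2 * ((t + beta) * (t + beta))) + c * (2 * (K * dot w w))).
  { rewrite <- Rmult_plus_distr_l. apply Rmult_le_compat_l; lra. }
  assert (c * (2 * ((t + beta) * (t + beta))) <= a * ((t + beta) * (t + beta))).
  { rewrite <- Rmult_assoc. apply Rmult_le_compat_r; [apply Rle_0_sqr | lra]. }
  assert (c * (2 * (K * dot w w)) + c * dot w w <= c' * dot w w).
  { replace (c * (2 * (K * dot w w)) + c * dot w w) with ((c * (1 + 2 * K)) * dot w w) by ring.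
    apply Rmult_le_compat_r; assumption. }
  lra.
Qed.

Lemma psd_injective_coercive n (A : Mat n) :
  symmetric A -> (forall v, 0 <= quad A v) ->
  (forall v, (forall i, mv A v i = 0) -> forall i, v i = 0) ->
  exists c, 0 < c /\ forall v, c * dot v v <= quad A v.
Proof.
  revert A. induction n as [|m IH]; intros A Asym P K.
  - exists 1. split; [lra|]. intro v. unfold quad, dot. simpl. lra.
  - assert (Ha : 0 <= pivot m A).
    { pose proof (P (vcons 1 vzero)) as P1.
      rewrite quad_vcons, dot_zero_r, quad_zero in P1 by exact Asym. lra. }
    destruct (Req_dec (pivot m A) 0) as [Z|Hneq].
    { exfalso. pose proof (K _ (psd_pivot_zero_kernel A Asym P Z) Fin.F1) as H10.
      simpl in H10. lra. }
    set (b := pivot_col m A).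
    assert (Hschur_psd : forall w, 0 <= quad (schur m A) w).
    { intro w. pose proof (P (vcons (- dot b w / pivot m A) w)) as Pw.
      rewrite quad_vcons_schur in Pw by assumption. fold b in Pw.
      replace (- dot b w / pivot m A + dot b w / pivot m A) with 0 in Pw by (field; auto). lra. }
    assert (Hschur_inj : forall w, (forall i, mv (schur m A) w i = 0) -> forall i, w i = 0).
    { intros w Hw j.
      assert (Kv : forall i, mv A (vcons (- dot b w / pivot m A) w) i = 0).
      { intro i. pattern i; apply Fin.caseS'.
        - rewrite mv_vcons_F1. fold b. field. auto.
        - intro p. rewrite mv_vcons_FS by exact Asym. specialize (Hw p).
          rewrite mv_schur in Hw by exact Hneq. unfold vsub, vscal in Hw. fold b in Hw |- *.
          rewrite <- Hw. field. auto. }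
      exact (K _ Kv (Fin.FS j)). }
    destruct (IH _ (symmetric_schur m A Asym) Hschur_psd Hschur_inj) as [c' [Hc' Hq']].
    exact (coercive_of_schur A c' Asym ltac:(lra) Hc' Hq').
Qed.

Lemma quad_lower_bound {n} (H : Mat n) : exists C, forall v, - C * dot v v <= quad H v.
Proof.
  set (F := vsum n (fun i => dot (H i) (H i))).
  assert (HF : 0 <= F) by (apply vsum_nonneg; intro; apply dot_self_nonneg).
  exists (sqrt F). intro v.
  assert (Hmv : dot (mv H v) (mv H v) <= F * dot v v).
  { unfold F. rewrite Rmult_comm, <- vsum_scal.
    apply vsum_le. intro i. pose proof (cauchy_schwarz_sq (H i) v). unfold mv. lra. }
  pose proof (cauchy_schwarz_sq v (mv H v)) as CS. fold (quad H v) in CS.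
  pose proof (dot_self_nonneg v).
  assert (quad H v * quad H v <= (sqrt F * dot v v) * (sqrt F * dot v v)).
  { replace ((sqrt F * dot v v) * (sqrt F * dot v v)) with ((sqrt F * sqrt F) * (dot v v * dot v v))
      by ring.
    rewrite sqrt_sqrt by exact HF.
    apply Rle_trans with (dot v v * dot (mv H v) (mv H v)); [exact CS|].
    replace (F * (dot v v * dot v v)) with (dot v v * (F * dot v v)) by ring.
    apply Rmult_le_compat_l; assumption. }
  assert (0 <= sqrt F * dot v v) by (apply Rmult_le_pos; [apply sqrt_pos | assumption]).
  nra.
Qed.

Lemma quad_ge_of_unit {n} (H : Mat n) mu :
  (forall u, dot u u = 1 -> mu <= quad H u) -> forall v, mu * dot v v <= quad H v.
Proof.
  intros Hunit v. destruct (dot_self_nonneg v) as [Pv|Zv].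
  - set (u := vscal (/ sqrt (dot v v)) v).
    assert (Hsq : / sqrt (dot v v) * / sqrt (dot v v) = / dot v v)
      by (rewrite <- Rinv_mult, sqrt_sqrt; lra).
    assert (Hu : dot u u = 1)
      by (unfold u; rewrite dot_scal_l, dot_scal_r, <- Rmult_assoc, Hsq; field; lra).
    pose proof (Hunit u Hu) as Hmu. unfold u in Hmu. rewrite quad_scal, Hsq in Hmu.
    apply Rmult_le_compat_r with (r := dot v v) in Hmu; [|lra].
    replace (/ dot v v * quad H v * dot v v) with (quad H v) in Hmu by (field; lra).
    lra.
  - replace v with (@vzero n)
      by (apply functional_extensionality; intro i; symmetry; apply dot_self_eq0; auto).
    rewrite quad_zero, dot_zero_r. lra.
Qed.

Lemma rayleigh_infimum {n} (H : Mat n) : (exists v : Vec n, exists i, v i <> 0) ->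
  exists mu, (forall v, mu * dot v v <= quad H v) /\
             forall c, 0 < c -> ~ (forall v, (mu + c) * dot v v <= quad H v).
Proof.
  intros [v0 Hv0].
  set (E := fun r => exists u, dot u u = 1 /\ r = - quad H u).
  assert (Bd : bound E).
  { destruct (quad_lower_bound H) as [C HC].
    exists C. intros r [u [Hu ->]]. specialize (HC u). rewrite Hu in HC. lra. }
  assert (Ne : exists r, E r).
  { pose proof (dot_self_pos v0 Hv0) as P0.
    set (u := vscal (/ sqrt (dot v0 v0)) v0).
    exists (- quad H u), u. split; [|reflexivity].
    unfold u. rewrite dot_scal_l, dot_scal_r, <- Rmult_assoc, <- Rinv_mult, sqrt_sqrt by lra.
    field. lra. }
  destruct (completeness E Bd Ne) as [s [Ub Lub]].
  exists (- s). split.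
  - apply quad_ge_of_unit. intros u Hu.
    assert (- quad H u <= s) by (apply Ub; exists u; auto). lra.
  - intros c Hc Hall. enough (s <= s - c) by lra.
    apply Lub. intros r [u [Hu ->]]. specialize (Hall u). rewrite Hu in Hall. lra.
Qed.

Lemma eigenvalue_rayleigh_infimum {n} (H : Mat n) mu : symmetric H ->
  (forall v, mu * dot v v <= quad H v) ->
  (forall c, 0 < c -> ~ (forall v, (mu + c) * dot v v <= quad H v)) ->
  eigenvalue H mu.
Proof.
  intros Hsym Hmu Hinf.
  set (A := madd H (mscal (- mu) Id)).
  assert (QA : forall v, quad A v = quad H v - mu * dot v v)
    by (intro v; unfold A; rewrite quad_madd, quad_mscal, quad_Id; ring).
  assert (MA : forall v i, mv A v i = mv H v i - mu * v i)
    by (intros v i; unfold A; rewrite mv_madd, mv_mscal, mv_Id; unfold vadd, vscal; ring).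
  destruct (classic (exists v, (forall i, mv A v i = 0) /\ exists i, v i <> 0))
    as [[v [Hker Hnz]]|Nker].
  - exists v. split; [exact Hnz|]. intro i. specialize (Hker i). rewrite MA in Hker. lra.
  - exfalso.
    assert (Hinj : forall v, (forall i, mv A v i = 0) -> forall i, v i = 0).
    { intros v Hv i. apply NNPP. intro Hi. apply Nker. exists v. eauto. }
    assert (Hpsd : forall v, 0 <= quad A v) by (intro v; rewrite QA; specialize (Hmu v); lra).
    assert (Asym : symmetric A)
      by (apply symmetric_madd; [exact Hsym | apply symmetric_mscal, symmetric_Id]).
    destruct (psd_injective_coercive n A Asym Hpsd Hinj) as [c [Hc Hcoer]].
    apply (Hinf c Hc). intro v. specialize (Hcoer v). rewrite QA in Hcoer. lra.
Qed.

Lemma lambda_min_rayleigh {n} (H : Mat n) l :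
  symmetric H -> is_lambda_min H l -> forall v, l * dot v v <= quad H v.
Proof.
  intros Hsym [[v0 [Hv0 _]] Hmin] v.
  destruct (rayleigh_infimum H (ex_intro _ v0 Hv0)) as [mu [Hmu Hinf]].
  pose proof (Hmin mu (eigenvalue_rayleigh_infimum H mu Hsym Hmu Hinf)).
  pose proof (Hmu v). pose proof (dot_self_nonneg v).
  nra.
Qed.

(** * Norm of the accepted matrix *)

(* With [w = H v]: [4 k |w|^2 = quad H (k w + v) - quad H (k w - v)
   <= hi (|k w + v|^2 + |k w - v|^2)] for every [k], and the discriminant of this quadratic
   in [k] gives [|H v|^2 <= hi^2 |v|^2]. *)
Lemma spec_norm_le {n} (H : Mat n) lo hi s :
  symmetric H -> 0 <= hi -> - hi <= lo ->
  (forall v, lo * dot v v <= quad H v <= hi * dot v v) ->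
  is_spec_norm H s -> s <= hi.
Proof.
  intros Hsym Hhi Hlo Hlohi [_ Lub]. apply Lub. intros r [v [Hv ->]].
  assert (Hq : forall v, - hi * dot v v <= quad H v <= hi * dot v v).
  { intro u. specialize (Hlohi u). pose proof (dot_self_nonneg u). split; nra. }
  set (w := mv H v). set (X := dot w w). set (Y := dot v v).
  assert (HX : 0 <= X) by apply dot_self_nonneg.
  assert (HY : 0 <= Y) by apply dot_self_nonneg.
  assert (Hk : forall k, 0 <= 2 * hi * X * k * k + - 4 * X * k + 2 * hi * Y).
  { intro k.
    pose proof (Hq (vadd (vscal k w) v)) as [_ P1].
    pose proof (Hq (vsub (vscal k w) v)) as [P2 _].
    rewrite quad_add in P1 by exact Hsym. rewrite quad_sub in P2 by exact Hsym.
    rewrite dot_add_l, !dot_add_r, !dot_scal_l, !dot_scal_r in P1.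
    rewrite dot_sub_l, !dot_sub_r, !dot_scal_l, !dot_scal_r in P2.
    fold w X Y in P1, P2. rewrite (dot_comm v w) in P1, P2.
    assert (hi * (k * (k * X) + k * dot w v + (k * dot w v + Y))
            - (- hi * (k * (k * X) - k * dot w v - (k * dot w v - Y)))
            = 2 * hi * X * k * k + 2 * hi * Y) by ring.
    lra. }
  assert (HhX : 0 <= 2 * hi * X) by nra.
  pose proof (quadratic_nonneg_discr _ _ _ HhX Hk) as Hdisc.
  assert (HXY : X <= hi * hi * Y).
  { destruct (Req_dec X 0) as [Z|Z]; [rewrite Z; nra|].
    apply Rmult_le_reg_l with (16 * X); nra. }
  unfold vnorm. fold w X.
  apply Rle_trans with (sqrt (hi * hi * Y)); [apply sqrt_le_1_alt; exact HXY|].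
  rewrite sqrt_mult_alt, sqrt_square by nra.
  assert (sqrt Y <= 1) by exact Hv. pose proof (sqrt_pos Y). nra.
Qed.

Lemma loewner_rayleigh_bounds {n} (H : Mat n) m0 M0 :
  loewner_le (mscal m0 Id) H /\ loewner_le H (mscal M0 Id) ->
  forall v, m0 * dot v v <= quad H v <= M0 * dot v v.
Proof.
  intros [Hlo Hhi] v. specialize (Hlo v). specialize (Hhi v).
  rewrite quad_mscal, quad_Id in Hlo, Hhi. lra.
Qed.

Lemma dom_of_suff_dec {n} (f : Vec n -> R) gf psi gamma x H d :
  suff_dec f gf psi gamma x H d -> dom psi x.
Proof.
  intros [q [Fx [Fxd [_ [E _]]]]] Z. unfold Fobj in E. rewrite Z in E. discriminate.
Qed.

Lemma rejected_trial_below_threshold {n} (f : Vec n -> R) gf psi L gamma eta trial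
    x H0 J d k j lam :
  assumption1 f gf psi L -> 0 < gamma <= 1 -> 0 <= eta < 1 ->
  alg2_run f gf psi gamma eta trial x H0 J d -> (j < J k)%nat ->
  symmetric (trial (H0 k) j) -> (forall v, lam * dot v v <= quad (trial (H0 k) j) v) ->
  lam < accept_threshold L gamma eta.
Proof.
  intros A1 Hg He [_ [Inex [Rej [Acc _]]]] Hj Hsym Hlam.
  destruct (Rlt_dec lam (accept_threshold L gamma eta)) as [Ok|No]; [exact Ok|]. exfalso.
  apply (Rej k j Hj).
  apply (suff_dec_above_threshold f gf psi L gamma eta (x k) _ lam); auto.
  - exact (dom_of_suff_dec _ _ _ _ _ _ _ (Acc k)).
  - lra.
  - apply Inex. lia.
Qed.

Definition trialH2_shift (beta : R) (j : nat) : R :=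
  match j with O => 0 | S j' => / beta ^ j' end.

Lemma quad_trialH2 {n} (H0 : Mat n) beta j v :
  quad (trialH2 H0 beta j) v = quad H0 v + trialH2_shift beta j * dot v v.
Proof.
  destruct j; simpl; [ring|]. rewrite quad_madd, quad_mscal, quad_Id. reflexivity.
Qed.

Lemma symmetric_trialH2 {n} (H0 : Mat n) beta j : symmetric H0 -> symmetric (trialH2 H0 beta j).
Proof.
  intros Hsym. destruct j; simpl; [exact Hsym|].
  apply symmetric_madd; [exact Hsym | apply symmetric_mscal, symmetric_Id].
Qed.

Lemma trialH2_shift_nonneg beta j : 0 < beta -> 0 <= trialH2_shift beta j.
Proof. intros. destruct j; simpl; [lra | left; apply Rinv_0_lt_compat, pow_lt; lra]. Qed.

Lemma variant2_norm_bound {n} (f : Vec n -> R) gf psi L gamma beta eta m0 M0 x H0 J d :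
  assumption1 f gf psi L -> 0 < gamma <= 1 -> 0 < beta < 1 -> 0 <= eta < 1 ->
  0 < M0 ->
  (forall k, loewner_le (mscal m0 Id) (H0 k) /\ loewner_le (H0 k) (mscal M0 Id)) ->
  alg2_run f gf psi gamma eta (fun H0k j => trialH2 H0k beta j) x H0 J d ->
  forall k s, is_spec_norm (trialH2 (H0 k) beta (J k)) s -> s <= Mtilde2 L beta gamma eta m0 M0.
Proof.
  intros A1 Hg Hb He HM Lw Run k s Hs.
  pose proof (accept_threshold_pos L gamma eta (proj1 A1) Hg He) as Hls.
  set (ls := accept_threshold L gamma eta) in *.
  set (B := Mtilde2 L beta gamma eta m0 M0).
  assert (HB : M0 + Rmax 1 (/ beta * (ls - m0)) = B) by reflexivity.
  pose proof (Rmax_l 1 (/ beta * (ls - m0))). pose proof (Rmax_r 1 (/ beta * (ls - m0))).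
  assert (Hbinv : 1 < / beta) by (rewrite <- Rinv_1; apply Rinv_lt_contravar; lra).
  assert (HBm : - B <= m0).
  { destruct (Rle_dec 0 m0); [lra|].
    assert (ls - m0 <= / beta * (ls - m0)) by nra. lra. }
  assert (Hshift : trialH2_shift beta (J k) <= Rmax 1 (/ beta * (ls - m0))).
  { destruct (J k) as [|[|j]] eqn:EJ; simpl; [lra | rewrite Rinv_1; lra|].
    assert (Hrej : m0 + / beta ^ j < ls).
    { apply (rejected_trial_below_threshold f gf psi L gamma eta
             (fun H0k j => trialH2 H0k beta j) x H0 J d k (S j)); auto.
      - rewrite EJ. auto.
      - apply symmetric_trialH2, (proj1 Run).
      - intro v. rewrite quad_trialH2. simpl.
        pose proof (loewner_rayleigh_bounds _ _ _ (Lw k) v). lra. }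
    rewrite Rinv_mult.
    assert (/ beta * / beta ^ j <= / beta * (ls - m0)) by (apply Rmult_le_compat_l; lra).
    lra. }
  pose proof (trialH2_shift_nonneg beta (J k) (proj1 Hb)).
  apply (spec_norm_le (trialH2 (H0 k) beta (J k)) m0 B s);
    [apply symmetric_trialH2, (proj1 Run) | lra | exact HBm | |exact Hs].
  intro v. rewrite quad_trialH2.
  pose proof (loewner_rayleigh_bounds _ _ _ (Lw k) v). pose proof (dot_self_nonneg v).
  split; nra.
Qed.

Lemma variant1_norm_bound {n} (f : Vec n -> R) gf psi L gamma beta eta m0 M0 x H0 J d :
  assumption1 f gf psi L -> 0 < gamma <= 1 -> 0 < beta < 1 -> 0 <= eta < 1 -> 0 < M0 -> 0 < m0 ->
  (forall k, loewner_le (mscal m0 Id) (H0 k) /\ loewner_le (H0 k) (mscal M0 Id)) ->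
  alg2_run f gf psi gamma eta (fun H0k j => trialH1 H0k beta j) x H0 J d ->
  forall k s, is_spec_norm (trialH1 (H0 k) beta (J k)) s -> s <= Mtilde1 L beta gamma eta m0 M0.
Proof.
  intros A1 Hg Hb He HM0 Hm0 Lw Run k s Hs.
  pose proof (accept_threshold_pos L gamma eta (proj1 A1) Hg He) as Hls.
  set (ls := accept_threshold L gamma eta) in *.
  set (B := Mtilde1 L beta gamma eta m0 M0).
  assert (HB : M0 * Rmax 1 (ls / (beta * m0)) = B).
  { unfold B, Mtilde1. do 2 f_equal. unfold ls, accept_threshold. field.
    pose proof (sqrt_pos eta).
    assert (sqrt eta < 1) by (rewrite <- sqrt_1; apply sqrt_lt_1_alt; lra).
    nra. }
  pose proof (Rmax_l 1 (ls / (beta * m0))). pose proof (Rmax_r 1 (ls / (beta * m0))).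
  pose proof (loewner_rayleigh_bounds _ _ _ (Lw k)) as Bk.
  assert (Hscale : / beta ^ J k * M0 <= B).
  { destruct (J k) as [|j] eqn:EJ; simpl; [rewrite Rinv_1; nra|].
    assert (Hpj : 0 < / beta ^ j) by (apply Rinv_0_lt_compat, pow_lt; lra).
    assert (Hrej : / beta ^ j * m0 < ls).
    { apply (rejected_trial_below_threshold f gf psi L gamma eta
             (fun H0k j => trialH1 H0k beta j) x H0 J d k j); auto.
      - rewrite EJ. auto.
      - apply symmetric_mscal, (proj1 Run).
      - intro v. unfold trialH1. rewrite quad_mscal.
        pose proof (Bk v). pose proof (dot_self_nonneg v). nra. }
    rewrite Rinv_mult.
    apply Rle_trans with (M0 * (ls / (beta * m0))); [|nra].
    replace (M0 * (ls / (beta * m0))) with (/ beta * (ls / m0) * M0) by (field; lra).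
    apply Rmult_le_compat_r; [lra|]. apply Rmult_le_compat_l; [left; apply Rinv_0_lt_compat; lra|].
    apply Rmult_le_reg_r with m0; [lra|]. unfold Rdiv. rewrite Rmult_assoc, Rinv_l; lra. }
  assert (Hpos : 0 < / beta ^ J k) by (apply Rinv_0_lt_compat, pow_lt; lra).
  apply (spec_norm_le (trialH1 (H0 k) beta (J k)) (/ beta ^ J k * m0) B s);
    [apply symmetric_mscal, (proj1 Run) | nra | nra | |exact Hs].
  intro v. unfold trialH1. rewrite quad_mscal. pose proof (Bk v). pose proof (dot_self_nonneg v).
  split; nra.
Qed.

Theorem lemma4 (n : nat) (f : Vec n -> R) (gf : Vec n -> Vec n)
    (psi : Vec n -> ER) (L : R) (gamma : R) :
  assumption1 f gf psi L -> 0 < gamma <= 1 ->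
  (forall (x : Vec n) (H : Mat n) (sigma eta lmin : R) (d : Vec n),
     dom psi x -> symmetric H -> 0 < sigma ->
     strongly_convex sigma (Qfun gf psi x H) ->
     0 <= eta < 1 -> eta_inexact (Qfun gf psi x H) eta d ->
     is_lambda_min H lmin ->
     (1 - gamma) * ((1 - sqrt eta) / (1 + sqrt eta)) * sigma + lmin >= L ->
     suff_dec f gf psi gamma x H d) /\
  (forall (beta eta m0 M0 : R) (x : nat -> Vec n) (H0 : nat -> Mat n)
          (J : nat -> nat) (d : nat -> nat -> Vec n),
     0 < beta < 1 -> 0 <= eta < 1 -> 0 < M0 -> m0 <= M0 ->
     (forall k, loewner_le (mscal m0 Id) (H0 k) /\ loewner_le (H0 k) (mscal M0 Id)) ->
     (alg2_run f gf psi gamma eta (fun H0k j => trialH2 H0k beta j) x H0 J d ->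
        forall k s, is_spec_norm (trialH2 (H0 k) beta (J k)) s ->
          s <= Mtilde2 L beta gamma eta m0 M0) /\
     (0 < m0 -> (forall k, posdef (H0 k)) ->
      alg2_run f gf psi gamma eta (fun H0k j => trialH1 H0k beta j) x H0 J d ->
        forall k s, is_spec_norm (trialH1 (H0 k) beta (J k)) s ->
          s <= Mtilde1 L beta gamma eta m0 M0)).
Proof.
  intros A1 Hg. pose proof A1 as [_ [G [Lip _]]]. split.
  - intros x H sigma eta lmin d Hdom Hsym _ SC He Hin Hmin HC.
    exact (suff_dec_of_rayleigh_bound f gf psi L gamma x H sigma eta lmin d G Lip Hg Hdom SC
             He Hin (lambda_min_rayleigh H lmin Hsym Hmin) HC).
  - intros beta eta m0 M0 x H0 J d Hb He HM _ Lw. split.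
    + exact (variant2_norm_bound f gf psi L gamma beta eta m0 M0 x H0 J d A1 Hg Hb He HM Lw).
    + intros Hm0 _.
      exact (variant1_norm_bound f gf psi L gamma beta eta m0 M0 x H0 J d A1 Hg Hb He HM Hm0 Lw).
Qed.
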